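(* Let $k\ge 2$ and let $G_1,\dots,G_k$ be connected graphs, each with at least $3$ vertices, and let $G^*=G_1\Box G_2\Box\cdots\Box G_k$. Then $$rx_3(G^* )\le \sum_{i=1}^k rx_3(G_i).$$ Moreover, if $rx_3(G_i)=sdiam_3(G_i)$ for every $i$, then equality holds.
   Context: All graphs are finite, simple, undirected. An edge coloring may give adjacent edges the same color. A tree is rainbow if no two of its edges have the same color. For a connected graph $G$ on at least $3$ vertices, a $3$-rainbow coloring is an edge coloring such that every set of $3$ vertices is contained in some rainbow tree; $rx_3(G)$ is the minimum number of colors of a $3$-rainbow coloring. The Steiner distance $d(S)$ of a vertex set $S$ is the minimum number of edges of a tree containing $S$, and $sdiam_3(G)=\max\{d(S): S\subseteq V(G),|S|=3\}$. The Cartesian product $G\Box H$ has vertex set $V(G)\times V(H)$, with $(g_1,h_1)\sim(g_2,h_2)$ iff ($g_1=g_2$ and $h_1h_2\in E(H)$) or ($h_1=h_2$ and $g_1g_2\in E(G)$). *)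

From HB Require Import structures.
From mathcomp Require Import all_boot.
Set Implicit Arguments.
Unset Strict Implicit.
Unset Printing Implicit Defensive.

Section GraphDefs.
Variables (T : finType) (e : rel T).

Definition simple_graph : Prop := symmetric e /\ irreflexive e.

Definition connected_graph : Prop := forall x y : T, connect e x y.

Definition is_edge (f : {set T}) : bool :=
  [exists x, exists y, e x y && (f == [set x; y])].

Definition eadj (E : {set {set T}}) : rel T :=
  fun x y => (x != y) && ([set x; y] \in E).

(* (V, E) is a tree (a subgraph of the graph): E consists of edges of the
   graph with both ends in V, V is nonempty, (V,E) is connected, and it is
   acyclic (every edge {x,y} of E is a bridge: x and y are disconnected in
   E minus that edge). *)
Definition is_tree (V : {set T}) (E : {set {set T}}) : bool :=
  [&& E \subset [set f | is_edge f],
      [forall f in E, f \subset V],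
      V != set0,
      [forall x in V, forall y in V, connect (eadj E) x y] &
      [forall f in E, forall x, forall y,
         ((f == [set x; y]) && (x != y)) ==> ~~ connect (eadj (E :\ f)) x y]].

(* Steiner distance d(S): minimum number of edges of a tree containing S.
   (For connected graphs a spanning tree exists, with #|T|-1 edges, so the
   default value #|T| is never attained.) *)
Definition steiner_dist (S : {set T}) : nat :=
  \big[minn/#|T|]_(VE : {set T} * {set {set T}} |
                     is_tree VE.1 VE.2 && (S \subset VE.1)) #|VE.2|.

Definition sdiam3 : nat :=
  \max_(S : {set T} | #|S| == 3) steiner_dist S.

(* Edge colorings with m colors: a color in 'I_m for each 2-set (only the
   values on edges matter). *)
Definition rainbow m (c : {ffun {set T} -> 'I_m}) (E : {set {set T}}) : bool :=
  [forall f in E, forall g in E, (c f == c g) ==> (f == g)].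

Definition is_3rainbow_coloring m (c : {ffun {set T} -> 'I_m}) : bool :=
  [forall S : {set T}, (#|S| == 3) ==>
     [exists VE : {set T} * {set {set T}},
        [&& is_tree VE.1 VE.2, S \subset VE.1 & rainbow c VE.2]]].

Definition has_3rainbow_coloring (m : nat) : bool :=
  [exists c : {ffun {set T} -> 'I_m}, is_3rainbow_coloring c].

(* Coloring all
   2-sets with distinct colors needs at most #|{set T}| colors, so for a
   connected graph the minimum below ranges over a nonempty set. *)
Definition rx3 : nat :=
  \big[minn/#|{set T}|]_(m < #|{set T}|.+1 | has_3rainbow_coloring m) m.

End GraphDefs.

Definition cart_prod (k : nat) (T : 'I_k -> finType) (e : forall i, rel (T i))
  : rel {dffun forall i : 'I_k, T i} :=
  fun x y => [exists i : 'I_k, e i (x i) (y i) &&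
                 [forall j : 'I_k, (j != i) ==> (x j == y j)]].

From HB Require Import structures.
From mathcomp Require Import all_boot zify.
Set Implicit Arguments.
Unset Strict Implicit.
Unset Printing Implicit Defensive.

(* Fix optimal 3-rainbow colourings [cc i] of the factors and
   give an edge of the product that moves coordinate [i] the colour
   [(i, cc i (projected edge))], which uses \sum_i rx3 G_i colours.  For
   three vertices [w j] of the product, the [i]-th coordinates lie in a
   rainbow tree of [cc i], which contains a median [c i] joined to them by
   pairwise edge-disjoint walks.  Moving each [w j] to [c] one coordinate
   at a time along these walks gives a rainbow connected subgraph containing
   the three vertices; any spanning tree of it is a rainbow tree.

   Every edge of the product moves exactly one coordinate,
   and the edges of a tree moving coordinate [i] project onto a connected
   subgraph of G_i; so a tree containing [S] has at least
   \sum_i d(proj_i S) edges.  Choosing [S] whose projections realise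
   sdiam3 G_i, a rainbow tree for [S] in an optimal colouring of the product
   has at most rx3 (G_1 [] ... [] G_k) edges, which gives the reverse
   inequality. *)

Lemma bigmin_le (I : eqType) (r : seq I) (P : pred I) (F : I -> nat) N i0 :
  i0 \in r -> P i0 -> \big[minn/N]_(i <- r | P i) F i <= F i0.
Proof.
elim: r => [//|a r IH]; rewrite inE big_cons => /orP[/eqP<- -> | /IH H Pi].
  exact: geq_minl.
case: (P a); last exact: H.
exact: leq_trans (geq_minr _ _) (H Pi).
Qed.

(* A minimum [\big[minn/N]] is its default value or one of its admissible
   terms, so it satisfies every property shared by all of them. *)
Lemma bigmin_ind (I : eqType) (r : seq I) (P : pred I) (F : I -> nat) N
    (K : nat -> Prop) :
  K N -> (forall i, P i -> K (F i)) -> K (\big[minn/N]_(i <- r | P i) F i).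
Proof.
move=> KN KF; apply: (big_ind K) => // x y Kx Ky.
by rewrite /minn; case: ifP.
Qed.

Lemma card_extend (T : finType) (A : {set T}) n : #|A| <= n <= #|T| ->
  exists B : {set T}, A \subset B /\ #|B| = n.
Proof.
move=> /andP[]; rewrite leq_eqVlt => /predU1P[<- _|]; first by exists A.
elim: n => [//|n IH] ltAn lenT.
have [B [sAB cB]] : exists B : {set T}, A \subset B /\ #|B| = n.
  by move: ltAn; rewrite ltnS leq_eqVlt => /predU1P[<-|/IH]; [exists A|apply; lia].
have /subsetPn[x _ xB] : ~~ ([set: T] \subset B).
  by rewrite subTset; apply/negP => /eqP eBT; move: lenT; rewrite -cB eBT cardsT; lia.
exists (x |: B); split; first exact: subset_trans sAB (subsetUr _ _).
by rewrite cardsU1 xB cB.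
Qed.

Lemma enum3 (T : finType) (S : {set T}) : #|S| = 3 ->
  exists w : 'I_3 -> T, injective w /\ S = [set w j | j in 'I_3].
Proof.
move=> S3; exists (fun j => enum_val (cast_ord (esym S3) j)); split.
  by move=> j j' /enum_val_inj/cast_ord_inj.
apply/setP => x; apply/idP/imsetP => [xS|[j _ ->]]; last exact: enum_valP.
by exists (cast_ord S3 (enum_rank_in xS x)); rewrite // cast_ordK enum_rankK_in.
Qed.

Definition j0 : 'I_3 := @Ordinal 3 0 isT.
Definition j1 : 'I_3 := @Ordinal 3 1 isT.
Definition j2 : 'I_3 := @Ordinal 3 2 isT.

Lemma ord3_cases (j : 'I_3) : [\/ j = j0, j = j1 | j = j2].
Proof.
by case: j => [[|[|[|n]]] h]; [apply: Or31|apply: Or32|apply: Or33|]; try exact: val_inj.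
Qed.

Section Subgraphs.
Variables (T : finType) (e : rel T).

Lemma eadj_sym (E : {set {set T}}) : symmetric (eadj E).
Proof. by move=> x y; rewrite /eadj eq_sym setUC. Qed.

Lemma eadj_connect_sym (E : {set {set T}}) : connect_sym (eadj E).
Proof. exact: sym_connect_sym (eadj_sym E). Qed.

Lemma connect_eadj_sub (E E' : {set {set T}}) x y : E \subset E' ->
  connect (eadj E) x y -> connect (eadj E') x y.
Proof.
move=> sEE'; apply: connect_sub => a b /andP[ab abE]; apply: connect1.
by rewrite /eadj ab (subsetP sEE').
Qed.

Lemma connect_eadj_hom (U : finType) (r : rel U) (h : U -> T)
    (E : {set {set T}}) x y :
  (forall a b, r a b -> connect (eadj E) (h a) (h b)) ->
  connect r x y -> connect (eadj E) (h x) (h y).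
Proof.
move=> hr /connectP[p]; elim: p x => [x _ -> //|z p IH x /= /andP[rxz pth] ey].
exact: connect_trans (hr _ _ rxz) (IH z pth ey).
Qed.

Lemma set2_inj (a b x y : T) : a != b -> [set a; b] = [set x; y] ->
  (a = x /\ b = y) \/ (a = y /\ b = x).
Proof.
move=> ab eab.
have : a \in [set x; y] by rewrite -eab set21.
have : b \in [set x; y] by rewrite -eab set22.
rewrite !inE => /orP[]/eqP eb /orP[]/eqP ea; subst; auto; by rewrite eqxx in ab.
Qed.

(* Spanning trees: a subgraph [E] of [e] connecting the nonempty vertex set
   [V] and living inside [V] contains a tree on [V], namely any edge-minimal
   connecting subset (removing an edge of it disconnects its ends). *)
Lemma spanning_tree (V : {set T}) (E : {set {set T}}) :
  E \subset [set f | is_edge e f] -> (forall f, f \in E -> f \subset V) ->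
  V != set0 -> {in V &, forall x y, connect (eadj E) x y} ->
  exists2 E' : {set {set T}}, E' \subset E & is_tree e V E'.
Proof.
move=> sE sV V0 cE.
pose P (E' : {set {set T}}) :=
  (E' \subset E) && [forall x in V, forall y in V, connect (eadj E') x y].
have PE : P E.
  by rewrite /P subxx; apply/forall_inP => x xV; apply/forall_inP => y yV; apply: cE.
have [E0 /andP[sE0 cE0] minE0] := arg_minnP (fun E' : {set {set T}} => #|E'|) PE.
exists E0 => //; apply/and5P; split => //.
- exact: subset_trans sE0 sE.
- by apply/forall_inP => f fE0; apply: sV; apply: (subsetP sE0).
apply/forall_inP => f fE0; apply/forallP => x; apply/forallP => y.
apply/implyP => /andP[/eqP fxy xy]; apply/negP => cxy.
have : P (E0 :\ f).
  rewrite /P (subset_trans (subsetDl _ _) sE0).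
  apply/forall_inP => u uV; apply/forall_inP => v vV.
  have /forall_inP/(_ u uV)/forall_inP/(_ v vV) := cE0.
  apply: connect_sub => a b /andP[ab abE].
  case: (eqVneq [set a; b] f) => [abf | abf].
    rewrite fxy in abf; case: (set2_inj ab abf) => [[-> ->]|[-> ->]] //.
    by rewrite eadj_connect_sym.
  by apply: connect1; rewrite /eadj ab !inE abf abE.
by move=> /minE0; rewrite (cardsD1 f E0) fE0; lia.
Qed.

Lemma component_tree (E : {set {set T}}) x0 :
  E \subset [set f | is_edge e f] ->
  exists2 E' : {set {set T}}, E' \subset E &
    is_tree e [set y | connect (eadj E) x0 y] E'.
Proof.
move=> sE; set V := [set y | connect (eadj E) x0 y].
set E1 := [set f in E | f \subset V].
have sE1 : E1 \subset E by apply/subsetP => f; rewrite inE => /andP[].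
(* a walk from [x0] only uses edges with both ends in the component *)
have cE1 y : y \in V -> connect (eadj E1) x0 y.
  rewrite inE => /connectP[p pth ->].
  suff ext x : connect (eadj E) x0 x -> connect (eadj E1) x0 x ->
      path (eadj E) x p -> connect (eadj E1) x0 (last x p) by exact: ext.
  elim: p x {pth} => [//|z p IH] x cx c1x /= /andP[xz pth].
  have cz : connect (eadj E) x0 z by apply: connect_trans cx (connect1 xz).
  apply: IH pth => //; apply: connect_trans c1x (connect1 _).
  move: xz => /andP[xz xzE]; rewrite /eadj xz inE xzE.
  by rewrite subUset !sub1set !inE cx cz.
have [E' sE' tr] : exists2 E' : {set {set T}}, E' \subset E1 & is_tree e V E'.
  apply: spanning_tree.
  - exact: subset_trans sE1 sE.
  - by move=> f; rewrite inE => /andP[].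
  - by apply/set0Pn; exists x0; rewrite inE.
  - move=> u v uV vV; apply: connect_trans _ (cE1 _ vV).
    by rewrite eadj_connect_sym; apply: cE1.
by exists E'; first exact: subset_trans sE' sE1.
Qed.

Lemma rainbow_sub m (c : {ffun {set T} -> 'I_m}) (E E' : {set {set T}}) :
  E' \subset E -> rainbow c E -> rainbow c E'.
Proof.
move=> sE /forall_inP rbE; apply/forall_inP => f fE; apply/forall_inP => g gE.
by have /forall_inP := rbE f (subsetP sE _ fE); apply; apply: (subsetP sE).
Qed.

Lemma rainbow_card m (c : {ffun {set T} -> 'I_m}) (E : {set {set T}}) :
  rainbow c E -> #|E| <= m.
Proof.
move=> /forall_inP rbE; rewrite -(@card_in_imset _ _ c E).
  by rewrite -[m in _ <= m]card_ord max_card.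
move=> f g fE gE cfg; have /forall_inP/(_ g gE) := rbE f fE.
by rewrite cfg eqxx => /eqP.
Qed.

Lemma steiner_dist_le (S V : {set T}) (E : {set {set T}}) :
  is_tree e V E -> S \subset V -> steiner_dist e S <= #|E|.
Proof.
move=> tr sSV.
apply: (@bigmin_le _ _ _ (fun VE : {set T} * {set {set T}} => #|VE.2|) _ (V, E));
  by rewrite ?mem_index_enum //= tr sSV.
Qed.

Lemma rx3_le m : has_3rainbow_coloring e m -> rx3 e <= m.
Proof.
move=> col_m; have [le_m_N | lt_N_m] := leqP m #|{set T}|.
  exact: (@bigmin_le _ _ _ (fun i : 'I_#|{set T}|.+1 => val i) _
            (Ordinal (le_m_N : m < #|{set T}|.+1))) (mem_index_enum _) col_m.
apply: leq_trans (ltnW lt_N_m).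
rewrite /rx3; apply: (@bigmin_ind _ _ _ _ _ (fun v => v <= #|{set T}|)) => //.
by move=> i _; apply: leq_ord.
Qed.

(* If every 3-set lies in a tree, then colouring all 2-sets with distinct
   colours is a 3-rainbow colouring, so the minimum defining [rx3] is
   attained. *)
Lemma rx3_attained :
  (forall S : {set T}, #|S| = 3 ->
     exists VE : {set T} * {set {set T}}, is_tree e VE.1 VE.2 && (S \subset VE.1)) ->
  has_3rainbow_coloring e (rx3 e).
Proof.
move=> trees; rewrite /rx3.
apply: (@bigmin_ind _ _ _ _ _ (has_3rainbow_coloring e)) => //.
apply/existsP; exists [ffun f => enum_rank f].
apply/forallP => S; apply/implyP => /eqP/trees[VE /andP[tr sS]].
apply/existsP; exists VE; rewrite tr sS.
apply/forall_inP => f _; apply/forall_inP => g _; rewrite !ffunE.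
by apply/implyP => /eqP/enum_rank_inj ->.
Qed.

Hypotheses (sg : simple_graph e) (cg : connected_graph e).

Lemma tree_through (S : {set T}) (x0 : T) :
  exists VE : {set T} * {set {set T}}, is_tree e VE.1 VE.2 && (S \subset VE.1).
Proof.
have [E' _ tr] := @component_tree [set f | is_edge e f] x0 (subxx _).
exists ([set y | connect (eadj [set f | is_edge e f]) x0 y], E').
rewrite /= tr; apply/subsetP => y _; rewrite inE.
apply: (@connect_eadj_hom T e id) (cg x0 y) => a b ab; apply: connect1.
rewrite /eadj inE; apply/andP; split.
  by apply/negP => /eqP eab; rewrite eab (proj2 sg b) in ab.
by apply/existsP; exists a; apply/existsP; exists b; rewrite ab eqxx.
Qed.

Lemma rx3_attained_connected : has_3rainbow_coloring e (rx3 e).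
Proof.
apply: rx3_attained => S S3.
have /set0Pn[x0 _] : S != set0 by rewrite -card_gt0 S3.
exact: tree_through.
Qed.

End Subgraphs.

Section Median.
Variable T : finType.
Implicit Type E : {set {set T}}.

Definition path_edges (x : T) (p : seq T) : seq {set T} :=
  pairmap (fun u v => [set u; v]) x p.

Lemma connect_path_edges E x p : path (eadj E) x p ->
  connect (eadj [set g in E | g \in path_edges x p]) x (last x p).
Proof.
move=> pth; apply/connectP; exists p => //; elim: p x pth => [//|y p IH] x.
rewrite /= => /andP[/andP[xy xyE] pth]; apply/andP; split.
  by rewrite /eadj xy inE xyE inE eqxx.
apply: sub_path (IH _ pth) => u v /andP[uv uvE]; rewrite /eadj uv.
by move: uvE; rewrite !inE => /andP[-> ->]; rewrite orbT.
Qed.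

Lemma path_edges_vertex x p g z : g \in path_edges x p -> z \in g -> z \in x :: p.
Proof.
elim: p x => [//|y p IH] x /=; rewrite inE => /orP[/eqP -> | /IH zp].
  by rewrite !inE => /orP[->|->]; rewrite ?orbT.
by move=> /zp yp; rewrite inE yp orbT.
Qed.

Lemma uniq_path_edges x p : uniq (x :: p) -> uniq (path_edges x p).
Proof.
elim: p x => [//|y p IH] x /= /andP[xyp /andP[yp up]].
rewrite (IH y) /= ?yp ?up // andbT.
apply/negP => /path_edges_vertex /(_ (set21 x y)).
by move: xyp => /negPf ->.
Qed.

Lemma walk_to_first_hit E (W : seq T) z p :
  path (eadj E) z p -> last z p \in W ->
  exists c (F : {set {set T}}), [/\ c \in W, F \subset E,
    (forall g, g \in F -> exists2 v, v \in g & v \notin W) &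
    connect (eadj F) z c].
Proof.
elim: p z => [|y p IH] z /=.
  by move=> _ zW; exists z, set0; split; rewrite ?sub0set // => g; rewrite inE.
move=> /andP[zy pth] /(IH _ pth) [c [F [cW sF leaveF cF]]].
have [zW | zW] := boolP (z \in W).
  by exists z, set0; split; rewrite ?sub0set // => g; rewrite inE.
exists c, ([set z; y] |: F); split => //.
- by rewrite subUset sub1set sF andbT; case/andP: zy.
- move=> g; rewrite in_setU1 => /orP[/eqP -> | /leaveF //].
  by exists z; rewrite ?set21.
- apply: connect_trans (connect1 _) (connect_eadj_sub (subsetUr _ _) cF).
  by case/andP: zy => zy _; rewrite /eadj zy !inE eqxx.
Qed.

(* The median: take a path [q] (without repeated vertices) from [a1] to
   [a2]; walking from [a3] towards [a2] until [q] is hit at [c] gives the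
   third walk, and [q] is split at [c] into the first two. *)
Lemma median E (a1 a2 a3 : T) :
  connect (eadj E) a1 a2 -> connect (eadj E) a1 a3 ->
  exists c (F1 F2 F3 : {set {set T}}),
    [/\ [/\ F1 \subset E, F2 \subset E & F3 \subset E],
        [/\ [disjoint F1 & F2], [disjoint F1 & F3] & [disjoint F2 & F3]] &
        [/\ connect (eadj F1) a1 c, connect (eadj F2) a2 c &
            connect (eadj F3) a3 c]].
Proof.
move=> c12 c13; have /connectP[p0 pth0 l0] := c12.
move: l0; case: (shortenP pth0) => q pthq uq _ l0.
have /connectP[r pthr lr] : connect (eadj E) a3 a2.
  by apply: connect_trans _ c12; rewrite eadj_connect_sym.
have a2q : last a3 r \in a1 :: q by rewrite -lr l0 mem_last.
have [c [F3 [cq sF3 leaveF3 cF3]]] := walk_to_first_hit pthr a2q.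
move: pthq uq l0 leaveF3; case/splitPl: cq => q1 q2 lq1 pthq uq l0 leaveF3.
move: (pthq); rewrite cat_path lq1 => /andP[p1 p2].
exists c, [set g in E | g \in path_edges a1 q1],
  [set g in E | g \in path_edges c q2], F3.
split.
- by split => //; apply/subsetP => g; rewrite inE => /andP[].
- split; apply/pred0P => g /=; apply/andP => -[]; rewrite ?inE.
  + move: uq => /uniq_path_edges; rewrite /path_edges pairmap_cat lq1 cat_uniq.
    move=> /and3P[_ /negP nh _] /andP[_ g1] /andP[_ g2].
    by apply: nh; apply/hasP; exists g.
  + move=> /andP[_ g1] /leaveF3[v vg]; apply/negP; apply/negPn.
    move: (path_edges_vertex g1 vg); rewrite !inE mem_cat => /orP[->|->] //.
    by rewrite orbT.
  + move=> /andP[_ g2] /leaveF3[v vg]; apply/negP; apply/negPn.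
    move: (path_edges_vertex g2 vg); rewrite inE => /orP[/eqP->|vq2].
      move: (mem_last a1 q1); rewrite lq1 !inE mem_cat.
      by case/orP=> ->; rewrite ?orbT.
    by rewrite inE mem_cat vq2 !orbT.
- split; last exact: cF3.
  + by move: (connect_path_edges p1); rewrite lq1.
  + by rewrite eadj_connect_sym l0 last_cat lq1; exact: connect_path_edges p2.
Qed.

Lemma median_family E (w : 'I_3 -> T) :
  (forall j, connect (eadj E) (w j0) (w j)) ->
  exists c (F : {ffun 'I_3 -> {set {set T}}}),
    [/\ forall j, F j \subset E,
        forall j j', j != j' -> [disjoint F j & F j'] &
        forall j, connect (eadj (F j)) (w j) c].
Proof.
move=> cw; have [c [F1 [F2 [F3 [[s1 s2 s3] [d12 d13 d23] [c1 c2 c3]]]]]] :=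
  median (cw j1) (cw j2).
exists c, [ffun j => if j == j0 then F1 else if j == j1 then F2 else F3].
split=> [j | j j' | j]; rewrite !ffunE.
- by case: (ord3_cases j) => ->.
- by case: (ord3_cases j) => ->; case: (ord3_cases j') => -> //= _;
    rewrite // disjoint_sym.
- by case: (ord3_cases j) => ->.
Qed.

End Median.

Section Product.
Variables (k : nat) (T : 'I_k -> finType) (e : forall i, rel (T i)).
Arguments e : clear implicits.
Hypothesis sg : forall i, simple_graph (e i).

Local Notation PT := {dffun forall i : 'I_k, T i}.
Local Notation pe := (cart_prod e).

Definition moves (f : {set PT}) (i : 'I_k) : bool :=
  [exists u in f, exists v in f, u i != v i].

Definition proj (i : 'I_k) (A : {set PT}) : {set T i} := [set v i | v : PT in A].

Lemma moves2 (x y : PT) i : moves [set x; y] i = (x i != y i).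
Proof.
apply/existsP/idP => [[u /andP[uf /existsP[v /andP[vf uv]]]] | xy].
  move: uf vf uv; rewrite !inE => /orP[]/eqP-> /orP[]/eqP->; rewrite ?eqxx //.
  by rewrite eq_sym.
by exists x; rewrite set21; apply/existsP; exists y; rewrite set22.
Qed.

Lemma proj_set2 i (x y : PT) : proj i [set x; y] = [set x i; y i].
Proof. by rewrite /proj imsetU1 imset_set1. Qed.

Lemma prod_edgeP (f : {set PT}) : is_edge pe f ->
  exists x y i, [/\ f = [set x; y], e i (x i) (y i) &
                    forall l, (x l != y l) = (l == i)].
Proof.
move=> /existsP[x /existsP[y /andP[/existsP[i /andP[exy /forallP same]] /eqP ->]]].
exists x, y, i; split => // l; have [->|li] := eqVneq l i.
  by apply/negP => /eqP exyi; rewrite exyi (proj2 (sg i)) in exy.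
by have /implyP/(_ li) -> := same l.
Qed.

(* Each edge of the product moves exactly one coordinate, so a set of edges
   is partitioned by the coordinate they move. *)
Lemma card_edges_by_dir (E : {set {set PT}}) :
  E \subset [set f | is_edge pe f] ->
  #|E| = \sum_(i < k) #|[set f in E | moves f i]|.
Proof.
move=> sE; rewrite -sum1_card.
transitivity (\sum_(f in E) \sum_(i < k) (moves f i : nat)).
  apply: eq_bigr => f fE; have := subsetP sE f fE; rewrite inE.
  move=> /prod_edgeP[x [y [i [-> _ dir]]]].
  rewrite (bigD1 i) //= moves2 dir eqxx big1 // => l /negPf li.
  by rewrite moves2 dir li.
rewrite exchange_big; apply: eq_bigr => i _.
rewrite -sum1_card big_mkcond [RHS]big_mkcond /=.
by apply: eq_bigr => f _; rewrite inE; case: (f \in E); case: (moves f i).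
Qed.

(* The edges of a tree moving coordinate [i] project onto a subgraph of
   [e i] connecting the projection of the tree, so there are at least as
   many of them as the Steiner distance of the projection of [S]. *)
Lemma steiner_proj_le (V S : {set PT}) (E : {set {set PT}}) i :
  is_tree pe V E -> S \subset V ->
  steiner_dist (e i) (proj i S) <= #|[set f in E | moves f i]|.
Proof.
move=> /and5P[sE _ /set0Pn[x0 x0V] cV _] sSV.
set Ei := [set f in E | moves f i].
set Pi := [set proj i f | f in Ei].
have sPi : Pi \subset [set g | is_edge (e i) g].
  apply/subsetP => g /imsetP[f /setIdP[fE di] ->].
  have := subsetP sE f fE; rewrite !inE => /prod_edgeP[x [y [j [fxy exy dir]]]].
  move: di; rewrite fxy moves2 dir => /eqP ij; subst j.
  rewrite proj_set2; apply/existsP; exists (x i); apply/existsP; exists (y i).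
  by rewrite exy eqxx.
have [E' sE' tr'] := component_tree (x0 i) sPi.
apply: leq_trans (steiner_dist_le tr' _) _.
  apply/subsetP => z /imsetP[s sS ->]; rewrite inE.
  have /forall_inP/(_ _ x0V)/forall_inP/(_ _ (subsetP sSV _ sS)) := cV.
  apply: (connect_eadj_hom (h := fun v : PT => v i)) => a b /andP[ab abE].
  have [-> //|abi] := eqVneq (a i) (b i).
  apply: connect1; rewrite /eadj abi.
  by apply/imsetP; exists [set a; b]; rewrite ?proj_set2 // inE abE moves2.
exact: leq_trans (subset_leq_card sE') (leq_imset_card _ _).
Qed.

Lemma sum_steiner_proj_le (V S : {set PT}) (E : {set {set PT}}) :
  is_tree pe V E -> S \subset V ->
  \sum_(i < k) steiner_dist (e i) (proj i S) <= #|E|.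
Proof.
move=> tr sSV; have [sE _ _ _ _] := and5P tr.
by rewrite (card_edges_by_dir sE) leq_sum // => i _; apply: steiner_proj_le tr sSV.
Qed.

(* Lower bound: in an optimal colouring of the product, a rainbow tree for
   the 3-set [S] has at most [rx3] edges. *)
Lemma sum_steiner_proj_le_rx3 (S : {set PT}) :
  #|S| = 3 -> has_3rainbow_coloring pe (rx3 pe) ->
  \sum_(i < k) steiner_dist (e i) (proj i S) <= rx3 pe.
Proof.
move=> /eqP S3 /existsP[c /forallP/(_ S)/implyP/(_ S3)/existsP[VE]].
move=> /and3P[tr sSV rb].
exact: leq_trans (sum_steiner_proj_le tr sSV) (rainbow_card rb).
Qed.

Definition setc (x : PT) (i : 'I_k) (v : T i) : PT := finfun (dfwith x v).
Arguments setc : clear implicits.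

Lemma setc_at x i (v : T i) : setc x i v i = v.
Proof. by rewrite ffunE dfwith_in. Qed.

Lemma setc_out x i (v : T i) l : l != i -> setc x i v l = x l.
Proof. by move=> li; rewrite ffunE dfwith_out // eq_sym. Qed.

Lemma setc_id x i : setc x i (x i) = x.
Proof.
by apply/ffunP => l; have [->|li] := eqVneq l i; rewrite ?setc_at ?setc_out.
Qed.

Lemma setc_moves x i (a b : T i) : a != b ->
  forall l, (setc x i a l != setc x i b l) = (l == i).
Proof.
by move=> ab l; have [->|li] := eqVneq l i; rewrite ?setc_at ?setc_out ?eqxx.
Qed.

Lemma setc_set2 x i (a b : T i) :
  setc x i @: [set a; b] = [set setc x i a; setc x i b].
Proof. by rewrite imsetU1 imset_set1. Qed.

Lemma setc_edge x i (a b : T i) : e i a b ->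
  is_edge pe [set setc x i a; setc x i b].
Proof.
move=> eab; apply/existsP; exists (setc x i a); apply/existsP; exists (setc x i b).
rewrite eqxx andbT; apply/existsP; exists i; rewrite !setc_at eab.
by apply/forallP => l; apply/implyP => li; rewrite !setc_out.
Qed.

Definition lift_edges (x : PT) (i : 'I_k) (F : {set {set T i}}) : {set {set PT}} :=
  [set setc x i @: g | g : {set T i} in F].
Arguments lift_edges : clear implicits.

Lemma connect_lift x i (F : {set {set T i}}) a b : connect (eadj F) a b ->
  connect (eadj (lift_edges x i F)) (setc x i a) (setc x i b).
Proof.
apply: connect_eadj_hom => u v /andP[uv uvF]; apply: connect1.
rewrite /eadj -setc_set2 imset_f // andbT.
by apply/negP => /eqP/(congr1 (fun y : PT => y i)); rewrite !setc_at; apply/eqP.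
Qed.

Definition stage (w c : PT) (n : nat) : PT :=
  finfun (fun l : 'I_k => if val l < n then c l else w l).

Lemma stage_at w c (i : 'I_k) : stage w c i i = w i.
Proof. by rewrite ffunE ltnn. Qed.

Lemma stage_next w c (i : 'I_k) : setc (stage w c i) i (c i) = stage w c i.+1.
Proof.
apply/ffunP => l; have [->|li] := eqVneq l i; first by rewrite setc_at ffunE ltnSn.
rewrite setc_out // !ffunE ltnS (leq_eqVlt (val l)).
by have /negPf-> : val l != val i by [].
Qed.

Lemma stage0 w c : stage w c 0 = w.
Proof. by apply/ffunP => l; rewrite ffunE. Qed.

Lemma stage_last w c : stage w c k = c.
Proof. by apply/ffunP => l; rewrite ffunE ltn_ord. Qed.

Section ProductColoring.
Variables (m : 'I_k -> nat) (cc : forall i, {ffun {set T i} -> 'I_(m i)}).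
(* [i0] only provides a colour for the 2-sets that are not edges. *)
Variable i0 : 'I_k.
Hypothesis cc_rainbow : forall i, is_3rainbow_coloring (e i) (cc i).
Hypothesis T3 : forall i, 3 <= #|T i|.

Definition prod_colors := {i : 'I_k & 'I_(m i)}.

Lemma card_prod_colors : #|{: prod_colors}| = \sum_(i < k) m i.
Proof.
rewrite card_tagged sumnE big_map big_enum /=.
by apply: eq_bigr => i _; rewrite card_ord.
Qed.

Definition edge_color (f : {set PT}) : prod_colors :=
  if [pick i | moves f i] is Some i
  then Tagged (fun i => 'I_(m i)) (cc i (proj i f))
  else Tagged (fun i => 'I_(m i)) (cc i0 set0).

Definition prod_coloring : {ffun {set PT} -> 'I_#|{: prod_colors}|} :=
  [ffun f => enum_rank (edge_color f)].

Lemma edge_color_lift x i (a b : T i) : a != b ->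
  edge_color [set setc x i a; setc x i b] =
  Tagged (fun i => 'I_(m i)) (cc i [set a; b]).
Proof.
move=> ab; rewrite /edge_color; case: pickP => [j | none].
  by rewrite moves2 setc_moves // => /eqP->; rewrite proj_set2 !setc_at.
by have := none i; rewrite moves2 setc_moves // eqxx.
Qed.

(* In each factor, the [i]-th coordinates of three vertices [w j] lie in a
   rainbow tree of [cc i], hence are joined to a median by edge-disjoint
   walks whose edges all get distinct colours. *)
Lemma factor_median (w : 'I_3 -> PT) i :
  exists (c : T i) (F : {ffun 'I_3 -> {set {set T i}}}),
  [/\ forall j, F j \subset [set g | is_edge (e i) g],
      rainbow (cc i) (\bigcup_j F j),
      forall j j', j != j' -> [disjoint F j & F j'] &
      forall j, connect (eadj (F j)) (w j i) c].
Proof.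
have [B [sB /eqP B3]] : exists B : {set T i},
    [set w j i | j in 'I_3] \subset B /\ #|B| = 3.
  apply: card_extend; rewrite T3 andbT.
  by apply: leq_trans (leq_imset_card _ _) _; rewrite card_ord.
have /forallP/(_ B)/implyP/(_ B3)/existsP[[V E] /and3P[tr sBV rb]] := cc_rainbow i.
have [sE _ _ cV _] := and5P tr.
have wV j : w j i \in V by apply/(subsetP sBV)/(subsetP sB)/imset_f.
have cw j : connect (eadj E) (w j0 i) (w j i).
  by have /forall_inP/(_ _ (wV j0))/forall_inP/(_ _ (wV j)) := cV.
have [c [F [sF dF cF]]] := median_family cw.
exists c, F; split => // [j|]; first exact: subset_trans (sF j) sE.
by apply: rainbow_sub rb; apply/bigcupsP => j _.
Qed.

(* Given the factor medians [c i] and walks [F i j], the union [star] of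
   the lifts of [F i j] at the [i]-th stage from [w j] to [c] joins each
   [w j] to [c] and is rainbow for the product colouring. *)
Section Star.
Variables (w : 'I_3 -> PT) (c : PT) (F : forall i, {ffun 'I_3 -> {set {set T i}}}).
Hypothesis F_edges : forall i j, F i j \subset [set g | is_edge (e i) g].
Hypothesis F_rainbow : forall i, rainbow (cc i) (\bigcup_j F i j).
Hypothesis F_disjoint : forall i j j', j != j' -> [disjoint F i j & F i j'].
Hypothesis F_connect : forall i j, connect (eadj (F i j)) (w j i) (c i).

Definition star : {set {set PT}} :=
  \bigcup_(j : 'I_3) \bigcup_(i : 'I_k) lift_edges (stage (w j) c i) i (F i j).

(* Induction on the stages: stage [n] of [w j] is joined to stage [n.+1]
   by the lift of the walk [F n j]. *)
Lemma star_connect j : connect (eadj star) (w j) c.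
Proof.
suff reach n : n <= k -> connect (eadj star) (stage (w j) c 0) (stage (w j) c n).
  by rewrite -{1}(stage0 (w j) c) -(stage_last (w j) c); apply: reach.
elim: n => [//|n IH] ltnk.
apply: connect_trans (IH (ltnW ltnk)) _; pose i := Ordinal ltnk.
rewrite -[n.+1]/(val i).+1 -stage_next -{1}(setc_id (stage (w j) c i) i) stage_at.
apply: connect_eadj_sub _ (connect_lift _ (F_connect i j)).
by apply: (bigcup_max j) => //; apply: (bigcup_max i).
Qed.

Lemma star_inv f : f \in star -> exists j i (a b : T i),
  [/\ [set a; b] \in F i j, e i a b &
      f = [set setc (stage (w j) c i) i a; setc (stage (w j) c i) i b]].
Proof.
move=> /bigcupP[j _ /bigcupP[i _ /imsetP[g gF ->]]].
have := subsetP (F_edges i j) g gF; rewrite inE.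
move=> /existsP[a /existsP[b /andP[eab /eqP gab]]].
by exists j, i, a, b; rewrite -setc_set2 -gab.
Qed.

Lemma star_edges : star \subset [set f | is_edge pe f].
Proof.
by apply/subsetP => f /star_inv[j [i [a [b [_ eab ->]]]]]; rewrite inE setc_edge.
Qed.

(* Equal colours force the same direction [i], then the same edge of the
   rainbow set [\bigcup_j F i j], then the same walk [j] by disjointness. *)
Lemma star_rainbow : rainbow prod_coloring star.
Proof.
have neq i (a b : T i) : e i a b -> a != b.
  by move=> eab; apply: contraTneq eab => ->; rewrite (proj2 (sg i)).
apply/forall_inP => f /star_inv[j [i [a [b [abF /neq ab ->]]]]].
apply/forall_inP => f' /star_inv[j' [i' [a' [b' [abF' /neq ab' ->]]]]].
rewrite !ffunE; apply/implyP => /eqP/enum_rank_inj.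
rewrite !edge_color_lift // => eT; have ii' : i' = i by have := congr1 tag eT.
subst i'; have /eqP ecc := eq_from_Tagged eT.
have inU j'' g : g \in F i j'' -> g \in \bigcup_j F i j.
  by move=> gF; apply/bigcupP; exists j''.
have /forall_inP/(_ _ (inU _ _ abF'))/implyP/(_ ecc)/eqP eab :=
  forall_inP (F_rainbow i) _ (inU _ _ abF).
have [<-|jj'] := eqVneq j j'; first by rewrite -!setc_set2 eab.
by move: (disjointFr (F_disjoint i jj') abF); rewrite eab abF'.
Qed.

End Star.

Lemma prod_rainbow_tree (w : 'I_3 -> PT) :
  exists VE : {set PT} * {set {set PT}},
    [/\ is_tree pe VE.1 VE.2, forall j, w j \in VE.1 & rainbow prod_coloring VE.2].
Proof.
have [c medF] := fin_all_exists (factor_median w).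
have [F /all_and4[F_edges F_rainbow F_disjoint F_connect]] := fin_all_exists medF.
set S := star w (finfun c) F.
have conn j : connect (eadj S) (w j) (finfun c).
  by apply: star_connect => // i j'; rewrite ffunE.
have [E' sE' tr] := component_tree (w j0) (star_edges w (finfun c) F_edges).
exists ([set y | connect (eadj S) (w j0) y], E'); split => //=.
  by move=> j; rewrite inE; apply: connect_trans (conn j0) _; rewrite eadj_connect_sym.
exact: rainbow_sub (star_rainbow w (finfun c) F_edges F_rainbow F_disjoint).
Qed.

Lemma prod_coloring_3rainbow : is_3rainbow_coloring pe prod_coloring.
Proof.
apply/forallP => S; apply/implyP => /eqP/enum3[w [_ ->]].
have [VE [tr wV rb]] := prod_rainbow_tree w.
apply/existsP; exists VE; rewrite tr rb andbT.
by apply/subsetP => x /imsetP[j _ ->].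
Qed.

Lemma rx3_prod_attained : has_3rainbow_coloring pe (rx3 pe).
Proof.
apply: rx3_attained => S /enum3[w [_ ->]].
have [VE [tr wV _]] := prod_rainbow_tree w.
by exists VE; rewrite tr; apply/subsetP => x /imsetP[j _ ->].
Qed.

End ProductColoring.
End Product.

Lemma sdiam3_attained (T : finType) (e : rel T) : 3 <= #|T| ->
  exists t : 'I_3 -> T,
    injective t /\ sdiam3 e = steiner_dist e [set t j | j in 'I_3].
Proof.
move=> T3; have [B [_ /eqP B3]] : exists B : {set T}, set0 \subset B /\ #|B| = 3.
  by apply: card_extend; rewrite cards0 T3.
rewrite /sdiam3 (@bigmax_eq_arg _ B (fun S : {set T} => #|S| == 3)) //.
have [A /eqP/enum3[t [t_inj ->]] _] :=
  @arg_maxnP _ B (fun S : {set T} => #|S| == 3) (steiner_dist e) B3.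
by exists t.
Qed.

Unset Implicit Arguments.

Theorem theorem6 (k : nat) (T : 'I_k -> finType) (e : forall i, rel (T i)) :
  2 <= k ->
  (forall i, simple_graph (e i)) ->
  (forall i, connected_graph (e i)) ->
  (forall i, 3 <= #|T i|) ->
  rx3 (cart_prod e) <= \sum_(i < k) rx3 (e i) /\
  ((forall i, rx3 (e i) = sdiam3 (e i)) ->
     rx3 (cart_prod e) = \sum_(i < k) rx3 (e i)).
Proof.
move=> k2 sg cg T3; pose i0 : 'I_k := Ordinal (ltnW k2).
have [cc cc_rainbow] :=
  fin_all_exists (fun i => elimT existsP (rx3_attained_connected (sg i) (cg i))).
have upper : rx3 (cart_prod e) <= \sum_(i < k) rx3 (e i).
  rewrite -card_prod_colors; apply: rx3_le; apply/existsP.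
  by exists (prod_coloring cc i0); apply: prod_coloring_3rainbow.
split=> // sdiam_eq; apply/eqP; rewrite eqn_leq upper /=.
(* three vertices whose projections realise [sdiam3] in every factor *)
have [t /all_and2[t_inj t_sdiam]] :=
  fin_all_exists (fun i => sdiam3_attained (e i) (T3 i)).
pose W j : {dffun forall i, T i} := finfun (fun i => t i j).
have S3 : #|[set W j | j in 'I_3]| = 3.
  rewrite card_imset ?card_ord // => j j' /ffunP/(_ i0).
  by rewrite !ffunE => /t_inj.
apply: leq_trans (sum_steiner_proj_le_rx3 sg S3 (rx3_prod_attained sg i0 cc_rainbow T3)).
apply/eq_leq/eq_bigr => i _.
rewrite sdiam_eq t_sdiam /proj -imset_comp; congr steiner_dist.
by apply: eq_imset => j; rewrite /= ffunE.
Qed.
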